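(* Let $\nabla$ be an ES basic fusion operator with representing basic assignment $\Phi\mapsto\succeq_\Phi$. The following are equivalent: (i) $\nabla$ satisfies (ESF-P); (ii) for every society $N$, every $N$-profile $\Phi$ and all $E,E'\in\mathcal E$ with $|[\![B(E)]\!]|\le 2$, if $B(\nabla(E_i,E))\wedge B(E')\vdash\bot$ for all $i\in N$ then $B(\nabla(\Phi,E))\wedge B(E')\vdash\bot$; (iii) for every society $N$, every $N$-profile $\Phi$ and all interpretations $w,w'$, if $w\succ_{E_i}w'$ for all $i\in N$ then $w\succ_\Phi w'$.
   Context: Setting: epistemic space $(\mathcal E,B,\mathcal L_{\mathcal P})$ ($\mathcal E$ nonempty, $B:\mathcal E\to$ propositional formulas over finite $\mathcal P$, image modulo equivalence exactly the consistent formulas; $\mathcal W_{\mathcal P}$ valuations, $[\![\phi]\!]$ models); agents: well-ordered set $\mathcal S$; society: nonempty finite $N\subseteq\mathcal S$; $N$-profile $\Phi:N\to\mathcal E$, $E_i=\Phi(i)$, identified with $E_i$ if $N=\{i\}$; profiles on $\{i_1<\dots<i_n\}$, $\{j_1<\dots<j_m\}$ equivalent if $n=m$ and entries coincide position-wise. ES basic fusion operator: a map $\nabla(\Phi,E)\in\mathcal E$ with (ESF1) $B(\nabla(\Phi,E))\vdash B(E)$; (ESF2) equivalent profiles and $B(E)\equiv B(E')$ give equivalent $B(\nabla)$; (ESF3) if $B(E)\equiv B(E')\wedge B(E'')$ then $B(\nabla(\Phi,E'))\wedge B(E'')\vdash B(\nabla(\Phi,E))$; (ESF4) if moreover $B(\nabla(\Phi,E'))\wedge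 B(E'')\nvdash\bot$ then $B(\nabla(\Phi,E))\vdash B(\nabla(\Phi,E'))\wedge B(E'')$. Representing basic assignment: the unique $\Phi\mapsto\succeq_\Phi$ (total preorders on $\mathcal W_{\mathcal P}$, $\succ$ strict part, equal on equivalent profiles) with $[\![B(\nabla(\Phi,E))]\!]=\max([\![B(E)]\!],\succeq_\Phi)$, $\max(C,\succeq)=\{c\in C:c\succeq x\ \forall x\in C\}$. (ESF-P): for every society $N$, $N$-profile $\Phi$ and $E,E'$, if $\bigwedge_{i\in N}B(\nabla(E_i,E))\nvdash\bot$ and $B(\nabla(E_i,E))\wedge B(E')\vdash\bot$ for all $i\in N$, then $B(\nabla(\Phi,E))\wedge B(E')\vdash\bot$. *)

From HB Require Import structures.
From mathcomp Require Import all_boot all_order.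
Set Implicit Arguments. Unset Strict Implicit. Unset Printing Implicit Defensive.

Inductive formula (P : Type) : Type :=
| FVar of P
| FBot
| FTop
| FNeg of formula P
| FAnd of formula P & formula P
| FOr of formula P & formula P
| FImp of formula P & formula P.
Arguments FBot {P}. Arguments FTop {P}.

Definition valuation (P : finType) := {ffun P -> bool}.

Fixpoint eval (P : finType) (w : valuation P) (f : formula P) : bool :=
  match f with
  | FVar p => w p
  | FBot => false
  | FTop => true
  | FNeg g => ~~ eval w g
  | FAnd g h => eval w g && eval w h
  | FOr g h => eval w g || eval w h
  | FImp g h => eval w g ==> eval w h
  end.

Definition models (P : finType) (f : formula P) : {set valuation P} :=
  [set w | eval w f].

Definition entails (P : finType) (f g : formula P) : Prop :=
  forall w : valuation P, eval w f -> eval w g.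
Definition fequiv (P : finType) (f g : formula P) : Prop :=
  entails f g /\ entails g f.
Definition consistent (P : finType) (f : formula P) : Prop := ~ entails f FBot.

Definition bigAnd (P : Type) (fs : seq (formula P)) : formula P :=
  foldr (@FAnd P) FTop fs.

Definition epistemic_space (P : finType) (E : Type) (B : E -> formula P) : Prop :=
  inhabited E /\ (forall e, consistent (B e)) /\
  (forall f, consistent f -> exists e, fequiv (B e) f).

Definition well_ordered d (S : orderType d) : Prop :=
  well_founded (fun x y : S => (x < y)%O).

(* a society = a nonempty finite subset of S, represented canonically by the
   strictly increasing list of its elements *)
Definition society d (S : orderType d) :=
  {N : seq S | (N != [::]) && sorted (fun x y : S => (x < y)%O) N}.

Definition member d (S : orderType d) (N : society S) := {i : S | i \in sval N}.

Definition profile (E : Type) d (S : orderType d) (N : society S) := member N -> E.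

Definition agents d (S : orderType d) (N : society S) : seq (member N) :=
  pmap insub (sval N).

Definition entries E d (S : orderType d) (N : society S) (Phi : profile E N) : seq E :=
  map Phi (agents N).

Definition prof_equiv E d (S : orderType d) (N M : society S)
  (Phi : profile E N) (Psi : profile E M) : Prop := entries Phi = entries Psi.

Lemma single_proof d (S : orderType d) (i : S) :
  ([:: i] != [::]) && sorted (fun x y : S => (x < y)%O) [:: i].
Proof. by []. Qed.

Definition single d (S : orderType d) (i : S) : society S :=
  exist _ [:: i] (single_proof i).

Definition fusion_op (E : Type) d (S : orderType d) :=
  forall N : society S, profile E N -> E -> E.

(* nabla(E_i, E) for the agent i of N, with E_i = Phi(i) *)
Definition fuse_single E d (S : orderType d) (nabla : fusion_op E S)
  (N : society S) (Phi : profile E N) (x : member N) (e : E) : E :=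
  nabla (single (sval x)) (fun _ => Phi x) e.

Section Postulates.
Local Unset Implicit Arguments.
Variables (P : finType) (E : Type) (B : E -> formula P) (d : Order.disp_t)
  (S : orderType d) (nabla : fusion_op E S).

Definition ESF1 : Prop := forall N (Phi : profile E N) e,
  entails (B (nabla N Phi e)) (B e).
Definition ESF2 : Prop := forall N M (Phi : profile E N) (Psi : profile E M) e e',
  prof_equiv Phi Psi -> fequiv (B e) (B e') ->
  fequiv (B (nabla N Phi e)) (B (nabla M Psi e')).
Definition ESF3 : Prop := forall N (Phi : profile E N) e e' e'',
  fequiv (B e) (FAnd (B e') (B e'')) ->
  entails (FAnd (B (nabla N Phi e')) (B e'')) (B (nabla N Phi e)).
Definition ESF4 : Prop := forall N (Phi : profile E N) e e' e'',
  fequiv (B e) (FAnd (B e') (B e'')) ->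
  consistent (FAnd (B (nabla N Phi e')) (B e'')) ->
  entails (B (nabla N Phi e)) (FAnd (B (nabla N Phi e')) (B e'')).

Definition basic_fusion : Prop := ESF1 /\ ESF2 /\ ESF3 /\ ESF4.

Definition ESF_P : Prop := forall N (Phi : profile E N) e e',
  consistent (bigAnd [seq B (fuse_single nabla Phi x e) | x <- agents N]) ->
  (forall x : member N, entails (FAnd (B (fuse_single nabla Phi x e)) (B e')) FBot) ->
  entails (FAnd (B (nabla N Phi e)) (B e')) FBot.
End Postulates.

Definition assignment (P : finType) (E : Type) d (S : orderType d) :=
  forall N : society S, profile E N -> valuation P -> valuation P -> Prop.

Definition total_preorder (T : Type) (R : T -> T -> Prop) : Prop :=
  (forall x y, R x y \/ R y x) /\ (forall x y z, R x y -> R y z -> R x z).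

Definition strict (T : Type) (R : T -> T -> Prop) (x y : T) : Prop :=
  R x y /\ ~ R y x.

Definition in_max (T : finType) (C : {set T}) (R : T -> T -> Prop) (w : T) : Prop :=
  w \in C /\ (forall x, x \in C -> R w x).

Definition represents (P : finType) (E : Type) (B : E -> formula P) d
  (S : orderType d) (nabla : fusion_op E S) (ge : assignment P E S) : Prop :=
  (forall N (Phi : profile E N), total_preorder (ge N Phi)) /\
  (forall N M (Phi : profile E N) (Psi : profile E M), prof_equiv Phi Psi ->
     forall w w', ge N Phi w w' <-> ge M Psi w w') /\
  (forall N (Phi : profile E N) e w,
     w \in models (B (nabla N Phi e)) <-> in_max (models (B e)) (ge N Phi) w).

Arguments ESF1 {P E} B {d S} nabla.
Arguments ESF2 {P E} B {d S} nabla.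
Arguments ESF3 {P E} B {d S} nabla.
Arguments ESF4 {P E} B {d S} nabla.
Arguments basic_fusion {P E} B {d S} nabla.
Arguments ESF_P {P E} B {d S} nabla.

From HB Require Import structures.
From mathcomp Require Import all_boot all_order.

Set Implicit Arguments. Unset Strict Implicit. Unset Printing Implicit Defensive.

(* Everything happens on the set [[B(E)]] ordered by the representing
   preorders.  (iii) -> (i): a common model w of all the individual fusions is
   maximal for every agent, so any model u of nabla(Phi,E) /\ B(E') lies
   strictly below w for every agent, hence strictly below w for Phi, against
   the maximality of u.  (i) -> (ii): on a set of at most two interpretations
   {u, w}, if u is not maximal for an agent then w is, so the individual
   fusions share the model w and (ESF-P) applies.  (ii) -> (iii): since every
   nonempty set of interpretations is the model set of some belief, take
   [[B(E)]] = {w, w'} and [[B(E')]] = {w'}; (ii) says that w' is not maximal in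
   {w, w'} for Phi, i.e. w strictly dominates w'. *)

Lemma eval_bigAnd_map (P : finType) (T : Type) (g : T -> formula P) s w :
  eval w (bigAnd (map g s)) = all (fun x => eval w (g x)) s.
Proof. by elim: s => //= x s ->. Qed.

Lemma mem_models (P : finType) (f : formula P) w : (w \in models f) = eval w f.
Proof. by rewrite inE. Qed.

Definition bigOr (P : Type) (fs : seq (formula P)) : formula P :=
  foldr (@FOr P) FBot fs.

Lemma eval_bigOr_map (P : finType) (T : Type) (g : T -> formula P) s w :
  eval w (bigOr (map g s)) = has (fun x => eval w (g x)) s.
Proof. by elim: s => //= x s ->. Qed.

Lemma inconsistent_eval (P : finType) (f : formula P) w :
  entails f FBot -> ~~ eval w f.
Proof. by move/(_ w); case: (eval w f) => // /(_ isT). Qed.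

Lemma consistent_sat (P : finType) (f : formula P) :
  consistent f -> exists w, eval w f.
Proof.
move=> f_cons; case: (pickP (fun w => eval w f)) => [w fw | f_unsat].
  by exists w.
by case: f_cons => w; rewrite f_unsat.
Qed.

Section SetFormula.
Variable P : finType.

Definition point_formula (w : valuation P) : formula P :=
  bigAnd [seq if w p then FVar p else FNeg (FVar p) | p <- enum P].

Lemma eval_point_formula (u w : valuation P) :
  eval u (point_formula w) = (u == w).
Proof.
rewrite eval_bigAnd_map; apply/allP/eqP => [uw | -> p _].
  by apply/ffunP => p; have := uw p (mem_enum _ p); case: (w p) => /=; case: (u p).
by case wp: (w p) => /=; rewrite wp.
Qed.

Definition set_formula (C : {set valuation P}) : formula P :=
  bigOr [seq point_formula w | w <- enum C].

Lemma models_set_formula (C : {set valuation P}) : models (set_formula C) = C.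
Proof.
apply/setP => u; rewrite inE eval_bigOr_map.
apply/hasP/idP => [[w] | uC]; last by exists u; rewrite ?mem_enum ?eval_point_formula.
by rewrite mem_enum eval_point_formula => wC /eqP ->.
Qed.

Lemma epistemic_space_models (E : Type) (B : E -> formula P) :
  epistemic_space B ->
  forall C : {set valuation P}, C != set0 -> exists e, models (B e) = C.
Proof.
move=> [_ [_ B_onto]] C /set0Pn [w wC].
have [|e [Be_C C_Be]] := B_onto (set_formula C).
  by move/(_ w); rewrite -mem_models models_set_formula => /(_ wC).
exists e; apply/setP => u; rewrite -(models_set_formula C) !mem_models.
by apply/idP/idP; [apply: Be_C | apply: C_Be].
Qed.
End SetFormula.

Section TotalPreorder.
Variables (T : finType) (R : T -> T -> Prop).
Hypothesis R_total : total_preorder R.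

Lemma total_preorder_refl x : R x x.
Proof. by case: (R_total.1 x x). Qed.

Lemma in_max_strict (C : {set T}) w u :
  in_max C R w -> u \in C -> ~ in_max C R u -> strict R w u.
Proof.
move=> [wC w_max] uC u_not_max; split; first exact: w_max.
by move=> Ruw; apply: u_not_max; split=> // y /w_max; apply: R_total.2.
Qed.
End TotalPreorder.

Lemma in_max_card_le2 (T : finType) (C : {set T}) u :
  #|C| <= 2 -> u \in C ->
  exists w, forall R, total_preorder R -> in_max C R u \/ in_max C R w.
Proof.
move=> C_le2 uC; case: (pickP [pred v in C | v != u]) => [v /andP [vC vu] | C_u].
  have C_uv : C = [set u; v].
    apply/eqP; rewrite eq_sym eqEcard cards2 eq_sym vu C_le2 andbT.
    by apply/subsetP => z; rewrite !inE => /orP [] /eqP ->.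
  exists v => R R_total; rewrite C_uv.
  have in_max_pair x y : R x y -> in_max [set x; y] R x.
    move=> Rxy; split; first by rewrite !inE eqxx.
    by move=> z; rewrite !inE => /orP [] /eqP -> //; apply: total_preorder_refl.
  case: (R_total.1 u v) => [/in_max_pair | /in_max_pair]; first by left.
  by rewrite setUC; right.
exists u => R R_total; left; split=> // y yC.
by move: (C_u y); rewrite /= yC => /negbFE /eqP ->; apply: total_preorder_refl.
Qed.

Lemma society_member d (S : orderType d) (N : society S) : inhabited (member N).
Proof. by case: N => [[|i s] //= Ns]; constructor; exists i; rewrite mem_head. Qed.

Lemma mem_agents d (S : orderType d) (N : society S) (x : member N) :
  x \in agents N.
Proof. by rewrite /agents mem_pmap_sub; case: x. Qed.

Section Characterization.
Local Unset Implicit Arguments.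
Variables (P : finType) (E : Type) (B : E -> formula P) (d : Order.disp_t)
  (S : orderType d) (nabla : fusion_op E S) (ge : assignment P E S).
Hypothesis ge_total : forall N (Phi : profile E N), total_preorder (ge N Phi).
Hypothesis nabla_max : forall N (Phi : profile E N) e w,
  w \in models (B (nabla N Phi e)) <-> in_max (models (B e)) (ge N Phi) w.
Local Set Implicit Arguments.

Definition ESF_P_card_le2 : Prop :=
  forall (N : society S) (Phi : profile E N) (e e' : E),
    #|models (B e)| <= 2 ->
    (forall x : member N,
       entails (FAnd (B (fuse_single nabla Phi x e)) (B e')) FBot) ->
    entails (FAnd (B (nabla N Phi e)) (B e')) FBot.

Definition strict_pareto : Prop :=
  forall (N : society S) (Phi : profile E N) (w w' : valuation P),
    (forall x : member N, strict (ge (single (sval x)) (fun _ => Phi x)) w w') ->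
    strict (ge N Phi) w w'.

Lemma eval_nabla_max N (Phi : profile E N) e w :
  eval w (B (nabla N Phi e)) <-> in_max (models (B e)) (ge N Phi) w.
Proof. by rewrite -mem_models. Qed.

Lemma not_in_max_of_inconsistent N (Phi : profile E N) e e' u :
  entails (FAnd (B (nabla N Phi e)) (B e')) FBot -> eval u (B e') ->
  ~ in_max (models (B e)) (ge N Phi) u.
Proof.
move=> incons u_e' /eval_nabla_max u_max.
by have := inconsistent_eval u incons; rewrite /= u_max u_e'.
Qed.

Lemma ESF_P_card_le2_of_ESF_P : ESF_P B nabla -> ESF_P_card_le2.
Proof.
move=> esfp N Phi e e' e_le2 incons u /= /andP [u_fused u_e'].
have [u_e _] := (eval_nabla_max _ _ _).1 u_fused.
have [w w_max] := in_max_card_le2 e_le2 u_e.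
have w_fused x : eval w (B (fuse_single nabla Phi x e)).
  apply/eval_nabla_max.
  have [u_max|//] := w_max _ (ge_total (single (sval x)) (fun _ => Phi x)).
  by case: (not_in_max_of_inconsistent (incons x) u_e' u_max).
have fused_cons : consistent (bigAnd [seq B (fuse_single nabla Phi x e) | x <- agents N]).
  move/(inconsistent_eval w); rewrite eval_bigAnd_map => /negP; apply.
  by apply/allP => x _; apply: w_fused.
by have := inconsistent_eval u (esfp N Phi e e' fused_cons incons); rewrite /= u_fused u_e'.
Qed.

Lemma strict_pareto_of_ESF_P_card_le2 :
  (forall C : {set valuation P}, C != set0 -> exists e, models (B e) = C) ->
  ESF_P_card_le2 -> strict_pareto.
Proof.
move=> B_onto esfp2 N Phi w w' w_above.
have [e e_ww'] : exists e, models (B e) = [set w; w'].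
  by apply: B_onto; apply/set0Pn; exists w; rewrite !inE eqxx.
have [e' e'_w'] : exists e', models (B e') = [set w'].
  by apply: B_onto; apply/set0Pn; exists w'; rewrite !inE.
have eval_e' u : eval u (B e') = (u == w') by rewrite -mem_models e'_w' inE.
have w'_not_max : ~ in_max (models (B e)) (ge N Phi) w'.
  apply: (not_in_max_of_inconsistent (e' := e')); last by rewrite eval_e'.
  apply: esfp2; first by rewrite e_ww' cards2; case: (w != w').
  move=> x u /= /andP [/eval_nabla_max [_ u_max]]; rewrite eval_e' => /eqP u_w'.
  exfalso; case: (w_above x) => _; apply; rewrite -u_w'.
  by apply: u_max; rewrite e_ww' !inE eqxx.
have not_w'w : ~ ge N Phi w' w.
  move=> w'w; apply: w'_not_max; rewrite e_ww'; split; first by rewrite !inE eqxx orbT.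
  by move=> y; rewrite !inE => /orP [] /eqP -> //; apply: total_preorder_refl.
by split=> //; case: ((ge_total N Phi).1 w w').
Qed.

Lemma ESF_P_of_strict_pareto : strict_pareto -> ESF_P B nabla.
Proof.
move=> pareto N Phi e e' fused_cons incons u /= /andP [u_fused u_e'].
have [u_e u_max] := (eval_nabla_max _ _ _).1 u_fused.
have [w] := consistent_sat fused_cons; rewrite eval_bigAnd_map => /allP w_fused.
have w_max x : in_max (models (B e)) (ge (single (sval x)) (fun _ => Phi x)) w.
  exact/eval_nabla_max/w_fused/mem_agents.
have [x0] := society_member N.
have [_ not_uw] : strict (ge N Phi) w u.
  apply: pareto => x; apply: in_max_strict (w_max x) u_e _ => //.
  exact: not_in_max_of_inconsistent (incons x) u_e'.
by exfalso; apply/not_uw/u_max/(w_max x0).1.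
Qed.
End Characterization.

Theorem mainTheorem10 (P : finType) (E : Type) (B : E -> formula P)
  (d : Order.disp_t) (S : orderType d)
  (nabla : fusion_op E S) (ge : assignment P E S) :
  epistemic_space B -> well_ordered S ->
  basic_fusion B nabla -> represents B nabla ge ->
  (* (i) <-> (ii) *)
  (ESF_P B nabla <->
   (forall (N : society S) (Phi : profile E N) (e e' : E),
      #|models (B e)| <= 2 ->
      (forall x : member N,
         entails (FAnd (B (fuse_single nabla Phi x e)) (B e')) FBot) ->
      entails (FAnd (B (nabla N Phi e)) (B e')) FBot)) /\
  (* (ii) <-> (iii) *)
  ((forall (N : society S) (Phi : profile E N) (e e' : E),
      #|models (B e)| <= 2 ->
      (forall x : member N,
         entails (FAnd (B (fuse_single nabla Phi x e)) (B e')) FBot) ->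
      entails (FAnd (B (nabla N Phi e)) (B e')) FBot) <->
   (forall (N : society S) (Phi : profile E N) (w w' : valuation P),
      (forall x : member N,
         strict (ge (single (sval x)) (fun _ => Phi x)) w w') ->
      strict (ge N Phi) w w')).
Proof.
move=> es _ _ [ge_total [_ nabla_max]].
have i_ii := ESF_P_card_le2_of_ESF_P ge_total nabla_max.
have ii_iii := strict_pareto_of_ESF_P_card_le2 ge_total nabla_max
  (epistemic_space_models es).
have iii_i := ESF_P_of_strict_pareto ge_total nabla_max.
split; split=> H; [exact: i_ii H | exact: iii_i (ii_iii H) |
                   exact: ii_iii H | exact: i_ii (iii_i H)].
Qed.
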